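(* Let $G$ be a finite chordal graph and let $t\ge 0$ be an integer. Then $\hat\beta_t(G)=1$.
   Context: All graphs are finite and simple. For an integer $t\ge 0$, a graph $H$ is a $t$-shallow minor ($t$-minor) of a graph $G$ if $H$ can be obtained from $G$ by contracting pairwise vertex-disjoint connected subgraphs, each of radius at most $t$, into single vertices and deleting vertices (but not edges). Equivalently, there are pairwise disjoint sets $V_v\subseteq V(G)$, $v\in V(H)$, each inducing a connected subgraph of $G$ of radius at most $t$, such that $uv\in E(H)$ if and only if some edge of $G$ joins $V_u$ and $V_v$. In particular every induced subgraph of $G$ is a $t$-minor of $G$. For a graph $H$, $\beta(H)$ denotes the clique cover number of $H$: the minimum number of cliques partitioning $V(H)$. For $x\in V(H)$, $H_x$ denotes the subgraph of $H$ induced by the closed neighborhood $N_H[x]=\{x\}\cup N_H(x)$. Define $\tilde\beta(H)=\min_{x\in V(H)}\beta(H_x)$, and $\hat\beta_t(G)=\max\{\tilde\beta(H): H \text{ a nonempty } t\text{-minor of } G\}$ (the largest reduced neighborhood clique cover number of $G$). A graph is chordal if it has no induced cycle of length at least $4$. *)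

(* Simple graphs are symmetric irreflexive relations on a finType. *)
From mathcomp Require Import all_boot.
Set Implicit Arguments. Unset Strict Implicit. Unset Printing Implicit Defensive.

Section Graphs.
Variable V : finType.
Variable e : rel V.

Definition is_clique (K : {set V}) : bool :=
  [forall x in K, forall y in K, (x != y) ==> e x y].

(* beta of the induced subgraph on S: minimum number of cliques partitioning S.
   (The partition into singletons shows the minimum is at most #|S|.) *)
Definition clique_cover_number (S : {set V}) : nat :=
  \big[minn/#|S|]_(P : {set {set V}} | partition P S && [forall K in P, is_clique K]) #|P|.

Definition closed_nbhd (S : {set V}) (x : V) : {set V} :=
  [set y in S | (y == x) || e x y].

(* tilde beta of the induced subgraph on S (meaningful for S nonempty) *)
Definition reduced_nbhd_ccn (S : {set V}) : nat :=
  \big[minn/#|S|]_(x in S) clique_cover_number (closed_nbhd S x).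
End Graphs.

Section Minors.
Variable T : finType.
Variable e : rel T.

Definition radius_le (t : nat) (A : {set T}) : bool :=
  [exists c in A, forall y in A, exists n : 'I_t.+1, exists s : n.-tuple T,
     path (fun u v => e u v && (v \in A)) c s && (last c s == y)].

Definition shallow_family (t : nat) (P : {set {set T}}) : bool :=
  trivIset P && [forall A in P, radius_le t A].

(* The t-minor obtained from the branch-set family P: vertices are the
   members of P, two distinct branch sets adjacent iff some G-edge joins them. *)
Definition minor_rel : rel {set T} :=
  fun A B => (A != B) && [exists x in A, exists y in B, e x y].

(* hat beta_t(G): max of tilde beta over all nonempty t-minors of G
   (each t-minor is isomorphic to the one built from its branch sets). *)
Definition hat_beta (t : nat) : nat :=
  \max_(P : {set {set T}} | shallow_family t P && (P != set0))
     reduced_nbhd_ccn minor_rel P.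

Definition chordal : Prop :=
  forall (k : nat) (f : 'I_k -> T), 4 <= k -> injective f ->
    ~ (forall i j : 'I_k, e (f i) (f j) = ((i.+1 %% k == j) || (j.+1 %% k == i))).
End Minors.

(* A nonempty t-minor H of a chordal graph G has a vertex whose closed
   neighbourhood is a clique, so tilde-beta(H) = 1; the singleton branch sets
   show that such an H exists.  To find the vertex, take a simplicial vertex v
   of the subgraph induced by the union of the branch sets (Dirac's lemma).  If
   v is alone in its branch set, that branch set is the wanted vertex of H.
   Otherwise some neighbour w of v in the same branch set is adjacent to every
   other neighbour of v, so deleting v keeps the branch set connected and
   changes no adjacency of H; induct on the total size of the branch sets. *)

From mathcomp Require Import all_boot zify.
Set Implicit Arguments. Unset Strict Implicit. Unset Printing Implicit Defensive.

Section ChordlessPaths.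
Variable T : finType.
Variable e : rel T.
Hypothesis e_sym : symmetric e.
Hypothesis e_irr : irreflexive e.

Fixpoint chordless (s : seq T) : bool :=
  if s is a :: s' then
    [&& a \notin s',
        (if s' is b :: r then e a b && all (fun z => ~~ e a z) r else true)
      & chordless s']
  else true.

Lemma chordless_uniq s : chordless s -> uniq s.
Proof. by elim: s => //= a s IH /and3P[-> _ /IH]. Qed.

Lemma chordless_nth s x0 i j : chordless s -> i < size s -> j < size s ->
  e (nth x0 s i) (nth x0 s j) = (i.+1 == j) || (j.+1 == i).
Proof.
elim: s i j => //= a s IH + + /and3P[_ ha /IH {}IH].
have ea j : j < size s -> e a (nth x0 s j) = (j == 0).
  case: s ha {IH} => //= b r /andP[eab /allP hr].
  by case: j => [|j] //= ltj; apply/negbTE/hr; exact: mem_nth.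
case=> [|i] [|j] //= hi hj.
- by rewrite ea // eqSS orbF.
- by rewrite e_sym ea // eqSS.
- by rewrite IH // !eqSS.
Qed.

Lemma path_chordless_subpath x s : path e x s ->
  exists s', [/\ chordless (x :: s'), last x s' = last x s & {subset s' <= s}].
Proof.
elim: {s}(size s) {-2}s (leqnn (size s)) x => [|n IH] [|a r] //= hs x;
  try by exists [::].
case/andP=> exa pr.
have [/hasP[z zr /orP[exz|/eqP zx]]|nh] := boolP (has (fun z => e x z || (z == x)) r).
- case/splitPr: zr pr hs => r1 r2; rewrite cat_path /= => /and3P[_ _ pz] hs.
  have hz : size (z :: r2) <= n by rewrite size_cat /= in hs *; lia.
  have [s' [cs' ls' ss']] := IH _ hz x (introT andP (conj exz pz)).
  exists s'; split => //; first by rewrite ls' last_cat.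
  by move=> w /ss'; rewrite !inE mem_cat /= inE => ->; rewrite !orbT.
- move: zx zr => -> /splitPr[r1 r2] in pr hs *.
  move: pr; rewrite cat_path /= => /and3P[_ _ pz].
  have hz : size r2 <= n by rewrite size_cat /= in hs *; lia.
  have [s' [cs' ls' ss']] := IH _ hz x pz.
  exists s'; split => //; first by rewrite ls' last_cat.
  by move=> w /ss' wr; rewrite inE mem_cat /= inE wr !orbT.
- have [s' [cs' ls' ss']] := IH r hs a pr.
  exists (a :: s'); split => //=; last first.
    by move=> w; rewrite !inE => /orP[->//|/ss' ->]; rewrite orbT.
  move: cs' => /= /and3P[-> -> ->]; rewrite exa !andbT inE negb_or.
  have -> /= : x != a by apply: contraTneq exa => ->; rewrite e_irr.
  apply/andP; split.
    by apply/negP => /ss' xr; move/hasPn: nh => /(_ x xr); rewrite eqxx orbT.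
  by apply/allP => w /ss' wr; move/hasPn: nh => /(_ w wr); rewrite negb_or => /andP[].
Qed.
Hypothesis e_chordal : chordal e.

Lemma chordal_no_chordless_cycle q u : chordless q -> 3 <= size q -> u \notin q ->
  (forall i, i < size q -> e u (nth u q i) = (i == 0) || (i == (size q).-1)) -> False.
Proof.
move=> cq q3 uq hu; set m := size q in q3 hu.
pose f (i : 'I_m.+1) := nth u (rcons q u) i.
apply: (e_chordal (f := f)); first by lia.
  move=> i j /eqP; rewrite /f nth_uniq ?size_rcons // => [/eqP/val_inj //|].
  by rewrite rcons_uniq uq chordless_uniq.
have modS i : i < m.+1 -> i.+1 %% m.+1 = if i == m then 0 else i.+1.
  by case: eqP => [->|ne] hi; rewrite ?modnn // modn_small //; lia.
move=> [i hi] [j hj]; rewrite /f /= !nth_rcons !modS // -/m.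
case: (ltnP i m) => im; case: (ltnP j m) => jm.
- by rewrite chordless_nth //; have [-> ->] : (i == m) = false /\ (j == m) = false by lia.
- have [-> ->] : j = m /\ (i == m) = false by lia.
  by rewrite eqxx e_sym hu //; lia.
- have [-> ->] : i = m /\ (j == m) = false by lia.
  by rewrite eqxx hu //; lia.
- have [-> ->] : i = m /\ j = m by lia.
  by rewrite eqxx e_irr; lia.
Qed.

Lemma chordal_chord u x y q : path e x (rcons q y) -> x != y -> e u x -> e u y ->
  {in q, forall z, (z != u) && ~~ e u z} -> e x y.
Proof.
move=> pq xy ux uy hq.
have [s [cs]] := path_chordless_subpath pq; rewrite last_rcons.
case/lastP: s cs => [|p y'] cs; first by move=> /= yx; rewrite yx eqxx in xy.
rewrite last_rcons => ey sq; subst y'.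
have y_p : y \notin p.
  by have := chordless_uniq cs; rewrite cons_uniq rcons_uniq => /andP[_ /andP[]].
have p_far : {in p, forall z, (z != u) && ~~ e u z}.
  move=> z zp; apply: hq; move: (sq z); rewrite !mem_rcons !inE zp orbT.
  by case/(_ isT)/orP=> // /eqP zy; rewrite -zy zp in y_p.
have u_p : u \notin p by apply/negP => /p_far; rewrite eqxx.
case: p cs {sq y_p} p_far u_p => [|a p] cs p_far u_p.
  by case/and3P: cs => _ /andP[].
exfalso; apply: (chordal_no_chordless_cycle (u := u) cs); first by rewrite /= size_rcons.
  have [u_x u_y] : u != x /\ u != y.
    by split; [apply: contraTneq ux | apply: contraTneq uy] => ->; rewrite e_irr.
  by rewrite in_cons mem_rcons in_cons (negbTE u_x) (negbTE u_y).
case=> [|i]; first by rewrite /= ux.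
rewrite -[nth _ _ _]/(nth u (rcons (a :: p) y) i) -[size _]/(size (rcons (a :: p) y)).+1.
rewrite size_rcons ltnS eqSS nth_rcons => hi.
case: ltnP => [ip|pi]; last first.
  have -> : i = size (a :: p) by lia.
  by rewrite eqxx uy.
have -> : (i == size (a :: p)) = false by lia.
by have /andP[_ /negbTE ->] := p_far _ (mem_nth u ip).
Qed.

End ChordlessPaths.

Lemma is_cliqueP (V : finType) (r : rel V) (K : {set V}) :
  reflect {in K &, forall x y, x != y -> r x y} (is_clique r K).
Proof.
apply: (iffP forallP) => [h x y xK yK xy | h x].
  by move/implyP: (h x) => /(_ xK)/forall_inP/(_ y yK)/implyP; apply.
by apply/implyP => xK; apply/forall_inP => y yK; apply/implyP; apply: h.
Qed.

Section Dirac.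
Variable T : finType.
Variable e : rel T.
Hypothesis e_sym : symmetric e.
Hypothesis e_irr : irreflexive e.
Hypothesis e_chordal : chordal e.

Definition simplicial (U : {set T}) (z : T) : Prop :=
  z \in U /\ {in U &, forall x y, x != y -> e z x -> e z y -> e x y}.

Section Component.
Variables (U : {set T}) (u c0 : T).
Hypotheses (c0U : c0 \in U) (c0u : c0 != u) (u_c0 : ~~ e u c0).

Definition far : {set T} := [set z in U | (z != u) && ~~ e u z].
Definition far_rel : rel T := [rel a b | [&& e a b, a \in far & b \in far]].
Definition far_comp : {set T} := [set z | connect far_rel c0 z].
Definition far_border : {set T} := [set s in U :\: far_comp | [exists c in far_comp, e s c]].

Let far_rel_sym : symmetric far_rel.
Proof. by move=> a b; rewrite /far_rel /= e_sym; do 2!case: (_ \in far); rewrite ?andbF. Qed.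
Let far_connect_sym : connect_sym far_rel := sym_connect_sym far_rel_sym.

Let far_closed : closed far_rel far.
Proof. by apply: (intro_closed far_connect_sym) => a b /and3P[]. Qed.

Lemma far_comp_sub : {subset far_comp <= far}.
Proof.
move=> z; rewrite inE => /(closed_connect far_closed) <-.
by rewrite inE c0U c0u.
Qed.

Lemma far_comp_step c z : c \in far_comp -> z \in far -> e c z -> z \in far_comp.
Proof.
move=> cC zF ecz; have cF := far_comp_sub cC.
rewrite /far_comp !inE in cC *; apply: (connect_trans cC); apply: connect1.
by rewrite /far_rel /= ecz cF zF.
Qed.

Lemma far_border_adj s : s \in far_border -> e u s.
Proof.
case/setIdP=> /setDP[sU sC] /exists_inP[c cC esc].
apply: contraTT sC; rewrite negbK => u_s; apply: (far_comp_step cC); last by rewrite e_sym.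
rewrite inE sU u_s andbT; apply: contraTneq esc => ->.
by have := far_comp_sub cC; rewrite inE => /and3P[].
Qed.

Lemma far_border_clique : {in far_border &, forall s s', s != s' -> e s s'}.
Proof.
move=> s s' sB s'B ss'.
have /setIdP[_ /exists_inP[a aC esa]] := sB.
have /setIdP[_ /exists_inP[b bC es'b]] := s'B.
have /connectP[p pab lp] : connect far_rel a b.
  rewrite /far_comp !inE in aC bC; rewrite far_connect_sym in aC.
  exact: connect_trans aC bC.
apply: (chordal_chord e_sym e_irr e_chordal (u := u) (q := a :: p)) => //.
- rewrite rcons_path /= esa -lp [e b _]e_sym es'b andbT.
  by apply: sub_path pab => ? ? /and3P[].
- exact: far_border_adj.
- exact: far_border_adj.
move=> z /(path_connect pab)/(closed_connect far_closed).
by rewrite (far_comp_sub aC) => /esym; rewrite inE => /and3P[_ -> ->].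
Qed.

Lemma far_comp_nbhd c z : c \in far_comp -> z \in U -> e c z -> z \in far_comp :|: far_border.
Proof.
move=> cC zU ecz; rewrite in_setU; case: (boolP (z \in far_comp)) => //= zC.
apply/setIdP; split; first by rewrite in_setD zC zU.
by apply/exists_inP; exists c; rewrite // e_sym.
Qed.

Lemma notin_far_comp_border : u \notin far_comp :|: far_border.
Proof.
rewrite in_setU negb_or; apply/andP; split.
  by apply/negP => /far_comp_sub; rewrite inE eqxx andbF.
by apply/negP => /far_border_adj; rewrite e_irr.
Qed.

Lemma far_comp_border_sub : far_comp :|: far_border \subset U.
Proof.
apply/subsetP => z; rewrite in_setU => /orP[/far_comp_sub|]; rewrite !inE.
  by case/andP.
by case/andP => /andP[].
Qed.

Lemma simplicial_far_comp z :
  z \in far_comp -> simplicial (far_comp :|: far_border) z -> simplicial U z.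
Proof.
move=> zC [_ hz]; split; first by have := far_comp_sub zC; rewrite inE => /andP[].
by move=> x y xU yU xy ezx ezy; apply: hz; rewrite // (far_comp_nbhd zC).
Qed.

End Component.

Lemma clique_simplicial (K : {set T}) z : z \in K -> is_clique e K -> simplicial K z.
Proof. by move=> zK /is_cliqueP Kcl; split=> // x y xK yK xy _ _; apply: Kcl. Qed.

(* Dirac's lemma, strengthened for the induction: the component C of c0 in
   G[U] - N[u] together with its border (a clique, by chordality) induces a
   smaller graph, and its simplicial vertices lying in C stay simplicial in U. *)
Lemma exists_simplicial_nonadj (U : {set T}) u c0 :
  u \in U -> c0 \in U -> c0 != u -> ~~ e u c0 ->
  exists z, [/\ simplicial U z, z != u & ~~ e u z].
Proof.
have [n] := ubnP #|U|; elim: n U u c0 => // n IHn U u c0 ltUn uU c0U c0u u_c0.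
set C := far_comp U u c0; set B := far_border U u c0; set W := C :|: B.
have ltWn : #|W| < n.
  have WU : W \proper U.
    apply/properP; split; first exact: far_comp_border_sub.
    by exists u => //; apply: notin_far_comp_border.
  by have := proper_card WU; lia.
have lift z : simplicial W z -> z \notin B -> exists z, [/\ simplicial U z, z != u & ~~ e u z].
  move=> zW zB; have zC : z \in C by have := zW.1; rewrite in_setU (negbTE zB) orbF.
  exists z; have := far_comp_sub c0U c0u u_c0 zC; rewrite inE => /and3P[_ -> ->].
  by split=> //; apply: (simplicial_far_comp c0U c0u u_c0).
have c0C : c0 \in C by rewrite inE connect0.
have c0B : c0 \notin B by apply/negP => /setIdP[/setDP[_]]; rewrite c0C.
have [Wcl|] := boolP (is_clique e W).
  by apply: (lift c0) => //; apply: clique_simplicial; rewrite // in_setU c0C.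
case/forall_inPn => x xW /forall_inPn[y yW]; rewrite negb_imply eq_sym => /andP[yx nxy].
have [z1 [z1W z1x x_z1]] := IHn W x y ltWn xW yW yx nxy.
have [z1B|] := boolP (z1 \in B); last exact: lift.
have [z2 [z2W z2z1 z1_z2]] : exists z, [/\ simplicial W z, z != z1 & ~~ e z1 z].
  by apply: (IHn W z1 x ltWn z1W.1 xW); [rewrite eq_sym | rewrite e_sym].
apply: (lift z2 z2W); apply: contra z1_z2 => z2B.
by apply: (far_border_clique c0U c0u u_c0) => //; rewrite eq_sym.
Qed.

Lemma exists_simplicial (U : {set T}) : U != set0 -> exists z, simplicial U z.
Proof.
case/set0Pn => z0 z0U; have [Ucl|] := boolP (is_clique e U).
  by exists z0; apply: clique_simplicial.
case/forall_inPn => x xU /forall_inPn[y yU]; rewrite negb_imply eq_sym => /andP[yx nxy].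
by have [z [zs _ _]] := exists_simplicial_nonadj xU yU yx nxy; exists z.
Qed.

End Dirac.

Lemma path_crossing (T : eqType) (r : rel T) (Q : pred T) c s :
  path r c s -> Q c -> ~~ Q (last c s) ->
  exists x y, [/\ x \in c :: s, Q x, ~~ Q y & r x y].
Proof.
elim: s c => [|a s IH] c /=; first by move=> _ ->.
case/andP=> rca ps Qc; have [Qa /(IH a ps Qa)[x [y [xs Qx Qy rxy]]]|Qa _] := boolP (Q a).
  by exists x, y; rewrite inE xs orbT.
by exists c, a; rewrite inE eqxx.
Qed.

Section BranchSets.
Variable T : finType.
Variable e : rel T.
Hypothesis e_sym : symmetric e.
Hypothesis e_irr : irreflexive e.
Hypothesis e_chordal : chordal e.

Definition adj (A B : {set T}) : bool := [exists x in A, exists y in B, e x y].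

Lemma adjP (A B : {set T}) : reflect (exists x y, [/\ x \in A, y \in B & e x y]) (adj A B).
Proof.
apply: (iffP exists_inP) => [[x xA /exists_inP[y yB exy]]|[x [y [xA yB exy]]]].
  by exists x, y.
by exists x => //; apply/exists_inP; exists y.
Qed.

Lemma adj_sym : symmetric adj.
Proof.
by move=> A B; apply/adjP/adjP => -[x [y [xA yB exy]]]; exists y, x; rewrite e_sym.
Qed.

Definition cut_connected (A : {set T}) : Prop :=
  forall X : {set T}, X \subset A -> X != set0 -> X != A ->
  exists x y, [/\ x \in X, y \in A :\: X & e x y].

Lemma path_targets_in (A : {set T}) c p :
  path (fun u v => e u v && (v \in A)) c p -> {subset p <= A}.
Proof.
elim: p c => //= a p IH c /andP[/andP[_ aA] pp] x.
by rewrite inE => /orP[/eqP -> //|]; apply: IH pp x.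
Qed.

Lemma radius_le_cut_connected t (A : {set T}) :
  radius_le e t A -> A != set0 /\ cut_connected A.
Proof.
case/exists_inP=> c cA /forall_inP reach; split; first by apply/set0Pn; exists c.
move=> X XA Xn0 XnA; have [cX|cX] := boolP (c \in X).
  have /subsetPn[y yA yX] : ~~ (A \subset X) by rewrite eqEsubset XA in XnA.
  have /existsP[n /existsP[p /andP[pp /eqP py]]] := reach y yA.
  have [|x [z [_ xX zX /andP[exz zA]]]] := path_crossing pp cX; first by rewrite py.
  by exists x, z; rewrite in_setD zX zA.
have [y yX] := set0Pn _ Xn0.
have /existsP[n /existsP[p /andP[pp /eqP py]]] := reach y (subsetP XA y yX).
have [|z [x [zp zX xX /andP[ezx xA]]]] := path_crossing (Q := [predC X]) pp cX.
  by rewrite /= py negbK.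
rewrite /= negbK in xX zX; exists x, z; rewrite in_setD zX e_sym ezx; split=> //.
by move: zp; rewrite inE => /orP[/eqP -> //|/(path_targets_in pp)].
Qed.

Lemma simplicial_nbrs_adj (U B C : {set T}) v :
  simplicial e U v -> B \subset U -> C \subset U -> [disjoint B & C] ->
  (exists2 y, y \in B & e v y) -> (exists2 z, z \in C & e v z) -> adj B C.
Proof.
move=> [_ sv] BU CU dBC [y yB vy] [z zC vz]; apply/adjP; exists y, z; split=> //.
have yU := subsetP BU y yB; have zU := subsetP CU z zC.
apply: sv => //; apply: contraTneq zC => <-.
by rewrite (disjointFr dBC yB).
Qed.

Lemma adj_delete_simplicial (U A B : {set T}) v w :
  simplicial e U v -> A \subset U -> B \subset U -> [disjoint A & B] ->
  w \in A :\ v -> e v w -> adj (A :\ v) B = adj A B.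
Proof.
move=> sv AU BU dAB wAv vw; apply/adjP/adjP => -[x [y [xA yB exy]]].
  by exists x, y; move: xA; rewrite in_setD => /andP[_ ->].
have [xv|xv] := eqVneq x v; last by exists x, y; rewrite in_setD1 xv.
apply/adjP; apply: (simplicial_nbrs_adj sv) => //.
- exact: subset_trans (subsetDl _ _) AU.
- exact: disjointWl (subsetDl _ _) dAB.
- by exists w.
- by exists y; rewrite -?xv.
Qed.

Lemma cut_connected_nbr (A : {set T}) v :
  cut_connected A -> v \in A -> A :\ v != set0 -> exists2 w, w \in A :\ v & e v w.
Proof.
move=> cA vA Av0; have [|||x [w [/set1P -> wAv vw]]] := cA [set v].
- by rewrite sub1set.
- by apply/set0Pn; exists v; rewrite set11.
- by apply: contraNneq Av0 => <-; rewrite setDv.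
by exists w.
Qed.

Lemma cut_connected_delete (U A : {set T}) v :
  A \subset U -> simplicial e U v -> v \in A -> cut_connected A -> A :\ v != set0 ->
  cut_connected (A :\ v).
Proof.
move=> AU sv vA cA Av0 X XAv X0 XnAv.
have XA : X \subset A := subset_trans XAv (subsetDl _ _).
have vX : v \notin X by apply/negP => /(subsetP XAv); rewrite !inE eqxx.
have [|x [y [xX /setDP[yA yX] exy]]] := cA X XA X0; first by apply: contraNneq vX => ->.
have [yv|yv] := eqVneq y v; last by exists x, y; rewrite !inE yv yA yX.
have /subsetPn[z zAv zX] : ~~ (A :\ v \subset X) by rewrite eqEsubset XAv in XnAv.
have [|||x2 [y2 [x2Xv /setDP[y2A y2Xv] e2]]] := cA (X :|: [set v]).
- by rewrite subUset XA sub1set.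
- by apply/set0Pn; exists v; rewrite in_setU set11 orbT.
- apply: contraNneq zX => XvA; move: zAv; rewrite -XvA !inE.
  by case/andP=> /negbTE ->; rewrite orbF.
have [y2X y2v] : y2 \notin X /\ y2 != v by apply/norP; rewrite -in_set1 -in_setU.
have y2Av : y2 \in A :\ v by rewrite in_setD1 y2v.
move: x2Xv; rewrite in_setU => /orP[x2X|/set1P x2v].
  by exists x2, y2; rewrite in_setD y2X.
have [xU y2U] := (subsetP AU x (subsetP XA x xX), subsetP AU y2 y2A).
exists x, y2; rewrite in_setD y2X; split=> //; apply: sv.2 => //.
- by apply: contraNneq y2X => <-.
- by rewrite e_sym -yv.
- by rewrite -x2v.
Qed.

Definition simplicial_branch (I : finType) (J : {set I}) (g : I -> {set T}) (i0 : I) : Prop :=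
  {in J &, forall j k, j != i0 -> k != i0 -> j != k ->
     adj (g i0) (g j) -> adj (g i0) (g k) -> adj (g j) (g k)}.

Lemma simplicial_branch_at (I : finType) (J : {set I}) (g : I -> {set T}) U v i0 :
  simplicial e U v -> {in J, forall i, g i \subset U} ->
  {in J &, forall i j, i != j -> [disjoint g i & g j]} ->
  g i0 \subset [set v] -> simplicial_branch J g i0.
Proof.
move=> sv gU dJ /subsetP gv j k jJ kJ _ _ jk /adjP[x [y [/gv/set1P-> yj vy]]].
case/adjP=> x' [z [/gv/set1P-> zk vz]].
apply: (simplicial_nbrs_adj sv (gU j jJ) (gU k kJ) (dJ j k jJ kJ jk)); first by exists y.
by exists z.
Qed.

Lemma exists_simplicial_branch (I : finType) (J : {set I}) (g : I -> {set T}) :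
  J != set0 -> {in J, forall i, g i != set0 /\ cut_connected (g i)} ->
  {in J &, forall i j, i != j -> [disjoint g i & g j]} ->
  exists2 i0, i0 \in J & simplicial_branch J g i0.
Proof.
have [n] := ubnP (\sum_(i in J) #|g i|); elim: n g => // n IHn g ltgn J0 gJ dJ.
set U := \bigcup_(i in J) g i.
have gU i : i \in J -> g i \subset U by move=> iJ; apply: bigcup_sup.
have [v sv] : exists v, simplicial e U v.
  apply: exists_simplicial => //; have [i iJ] := set0Pn _ J0.
  have [/set0Pn[x xi] _] := gJ i iJ; apply/set0Pn; exists x.
  exact: subsetP (gU i iJ) x xi.
have /bigcupP[i0 i0J vi0] := sv.1; have [_ ci0] := gJ i0 i0J.
have [Av0|Av0] := eqVneq (g i0 :\ v) set0.
  by exists i0 => //; apply: (simplicial_branch_at sv gU dJ); rewrite -setD_eq0 Av0.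
have [w wAv vw] := cut_connected_nbr ci0 vi0 Av0.
pose g' i := if i == i0 then g i0 :\ v else g i.
have adj' : {in J &, forall a b, a != b -> adj (g' a) (g' b) = adj (g a) (g b)}.
  have adj_i0 b : b \in J -> b != i0 -> adj (g i0 :\ v) (g b) = adj (g i0) (g b).
    move=> bJ bi0; apply: (adj_delete_simplicial sv (gU i0 i0J) (gU b bJ)) wAv vw.
    by apply: dJ; rewrite // eq_sym.
  move=> a b aJ bJ ab; rewrite /g'.
  case: (eqVneq a i0) => [ai0|ai0]; case: (eqVneq b i0) => [bi0|bi0] //.
  - by rewrite ai0 bi0 eqxx in ab.
  - by rewrite ai0 adj_i0.
  - by rewrite adj_sym adj_i0 // adj_sym bi0.
have [||||i1 i1J si1] := IHn g'.
- rewrite (bigD1 i0 i0J) /= /g' eqxx (eq_bigr (fun i => #|g i|)).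
    by move: ltgn; rewrite (bigD1 i0 i0J) /= (cardsD1 v (g i0)) vi0 /=; lia.
  by move=> i /andP[_ /negbTE ->].
- exact: J0.
- move=> i iJ; rewrite /g'; case: (eqVneq i i0) => [_|_]; last exact: gJ.
  by split=> //; apply: cut_connected_delete (gU i0 i0J) sv vi0 ci0 Av0.
- move=> i j iJ jJ ij; rewrite /g'.
  case: (eqVneq i i0) => [ei|_]; case: (eqVneq j i0) => [ej|_].
  + by rewrite ei ej eqxx in ij.
  + by subst i; apply: disjointWl (subsetDl _ _) (dJ _ _ _ _ _).
  + by subst j; apply: disjointWr (subsetDl _ _) (dJ _ _ _ _ _).
  + exact: dJ.
exists i1 => // j k jJ kJ ji1 ki1 jk.
by rewrite -!adj' // 1?eq_sym //; apply: si1.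
Qed.

End BranchSets.

Lemma bigmin_le (I : finType) (P : pred I) (F : I -> nat) d j :
  P j -> \big[minn/d]_(i | P i) F i <= F j.
Proof.
move=> Pj; have : j \in index_enum I := mem_index_enum j.
elim: (index_enum I) => //= a r IH; rewrite inE big_cons => /orP[/eqP <-|/IH jr].
  by rewrite Pj geq_minl.
by case: (P a) => //; apply: leq_trans (geq_minr _ _) jr.
Qed.

Section CliqueCover.
Variables (V : finType) (r : rel V).

Lemma clique_cover_number_gt0 (S : {set V}) : S != set0 -> 0 < clique_cover_number r S.
Proof.
case/set0Pn=> x xS; apply: (big_ind (fun n => 0 < n)).
- by apply/card_gt0P; exists x.
- by move=> a b; rewrite leq_min => -> ->.
move=> Q /andP[/and3P[/eqP cQ _ _] _]; apply/card_gt0P.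
by move: xS; rewrite -cQ => /bigcupP[B BQ _]; exists B.
Qed.

Lemma clique_cover_number_le1 (S : {set V}) :
  S != set0 -> is_clique r S -> clique_cover_number r S <= 1.
Proof.
move=> S0 cS; apply: leq_trans (bigmin_le _ _ (j := [set S]) _) _; last by rewrite cards1.
rewrite /partition cover1 eqxx trivIset1 inE eq_sym S0 /=.
by apply/forall_inP => K /set1P ->.
Qed.

Lemma closed_nbhd_self (S : {set V}) x : x \in S -> x \in closed_nbhd r S x.
Proof. by move=> xS; rewrite inE xS eqxx. Qed.

Lemma reduced_nbhd_ccn_eq1 (S : {set V}) x :
  x \in S -> is_clique r (closed_nbhd r S x) -> reduced_nbhd_ccn r S = 1.
Proof.
move=> xS cx; apply/eqP; rewrite eqn_leq; apply/andP; split.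
  apply: leq_trans (bigmin_le _ _ xS) _.
  by apply: clique_cover_number_le1 cx; apply/set0Pn; exists x; apply: closed_nbhd_self.
apply: (big_ind (fun n => 0 < n)); first by apply/card_gt0P; exists x.
  by move=> a b; rewrite leq_min => -> ->.
move=> y yS; apply: clique_cover_number_gt0.
by apply/set0Pn; exists y; apply: closed_nbhd_self.
Qed.

End CliqueCover.

Section Minors.
Variables (T : finType) (e : rel T).

Lemma shallow_family_singletons t : shallow_family e t [set [set x] | x : T].
Proof.
apply/andP; split.
  apply/trivIsetP => _ _ /imsetP[x _ ->] /imsetP[y _ ->] xy.
  by rewrite disjoints1 inE; apply: contraNneq xy => ->.
apply/forall_inP => _ /imsetP[x _ ->]; apply/exists_inP; exists x; rewrite ?set11 //.
apply/forall_inP => y /set1P ->; apply/existsP; exists ord0; apply/existsP; exists [tuple].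
by rewrite /= eqxx.
Qed.

Hypotheses (e_sym : symmetric e) (e_irr : irreflexive e) (e_chordal : chordal e).

Lemma shallow_minor_simplicial t (P : {set {set T}}) :
  shallow_family e t P -> P != set0 ->
  exists2 A, A \in P & is_clique (minor_rel e) (closed_nbhd (minor_rel e) P A).
Proof.
case/andP=> /trivIsetP dP /forall_inP rP P0.
have [||A AP sA] := exists_simplicial_branch e_sym e_irr e_chordal (g := id) P0.
- by move=> A /rP /(radius_le_cut_connected e_sym).
- exact: dP.
exists A => //; apply/is_cliqueP => B C /setIdP[BP AB] /setIdP[CP AC] BC.
rewrite /minor_rel BC /= -/(adj e B C).
case/orP: AB => [/eqP BA|/andP[AB adjAB]]; case/orP: AC => [/eqP CA|/andP[AC adjAC]].
- by rewrite BA CA eqxx in BC.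
- by rewrite BA.
- by rewrite CA adj_sym.
- by apply: sA; rewrite // eq_sym.
Qed.

End Minors.

Theorem theorem2p1 (T : finType) (e : rel T) (t : nat) :
  symmetric e -> irreflexive e -> 0 < #|T| -> chordal e -> hat_beta e t = 1.
Proof.
move=> e_sym e_irr /card_gt0P[x0 _] e_chordal.
have tilde_beta1 P : shallow_family e t P -> P != set0 -> reduced_nbhd_ccn (minor_rel e) P = 1.
  move=> sP P0; have [A AP cA] := shallow_minor_simplicial e_sym e_irr e_chordal sP P0.
  exact: reduced_nbhd_ccn_eq1 AP cA.
apply/eqP; rewrite eqn_leq; apply/andP; split.
  by apply/bigmax_leqP => P /andP[sP P0]; rewrite tilde_beta1.
have P0 : [set [set x] | x : T] != set0 by apply/set0Pn; exists [set x0]; apply: imset_f.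
rewrite -(tilde_beta1 _ (shallow_family_singletons e t) P0).
by apply: leq_bigmax_cond; rewrite shallow_family_singletons P0.
Qed.
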